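(* Let $\mathbf X\in\mathbb R^n$ be a random vector with $\|\mathbf X\|_\infty\le1$ and $\|\mathbf X\|_1\le s$ almost surely, with mean $\boldsymbol\mu^*$ and covariance matrix $\boldsymbol\Sigma^*$, and let $\nu^*_i=\mathbb E|X_i|$. Let $\mathcal A$ be a family of subsets of $[n]$ and $m=\max\{|A|:A\in\mathcal A\}$. Then for every $A\in\mathcal A$ and every $i\in[n]$, $$\sum_{j\in A}0\vee\Sigma^*_{ij}\le 2\nu^*_i(s\wedge m).$$
   Context: $\boldsymbol\Sigma^*=\mathbb E[(\mathbf X-\boldsymbol\mu^* )(\mathbf X-\boldsymbol\mu^* )^{\mathsf T}]$; $a\vee b=\max(a,b)$, $a\wedge b=\min(a,b)$. *)

From mathcomp Require Import all_boot all_order all_algebra.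
From mathcomp Require Import all_classical all_reals all_analysis.

From mathcomp Require Import all_boot all_order all_algebra.
From mathcomp Require Import all_classical all_reals all_analysis.
From mathcomp Require Import ess_sup_inf measurable_realfun.
Set Implicit Arguments.
Unset Strict Implicit.
Unset Printing Implicit Defensive.

Import Order.TTheory GRing.Theory Num.Theory.
Local Open Scope ring_scope.

(* Since X_i - mu_i has mean zero, Sigma_ij = E[(X_i - mu_i) X_j]. Summing over
   the j in A with Sigma_ij >= 0 gives E[(X_i - mu_i) S], where S is the sum of
   those X_j, and almost surely |S| <= min(s, #|A|) <= min(s, m). Hence the sum
   is at most min(s, m) E|X_i - mu_i| <= 2 min(s, m) nu_i, as |mu_i| <= nu_i. *)

Lemma ler_norm_sum_min (R : realDomainType) (I : finType) (x : I -> R)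
    (B : {pred I}) (s : R) :
  (forall i, `|x i| <= 1) -> \sum_i `|x i| <= s ->
  `|\sum_(i in B) x i| <= Order.min s #|B|%:R.
Proof.
move=> x_le1 sum_le_s; apply: le_trans (ler_norm_sum _ _ _) _.
rewrite le_min; apply/andP; split.
  apply: le_trans sum_le_s; rewrite [leRHS](bigID (mem B)) /= lerDl.
  by apply: sumr_ge0 => i _.
by rewrite -sum1_card natr_sum ler_sum.
Qed.

Section bounded_covariance.
Context d (T : measurableType d) (R : realType) (P : probability T R).
Local Open Scope ereal_scope.

Definition centered (X : T -> R) : T -> R := (X \- cst (fine 'E_P[X]))%R.

Lemma ae_exists (Q : T -> Prop) : {ae P, forall w, Q w} -> exists w, Q w.
Proof.
case=> N [mN PN notQN]; apply: contrapT => noQ.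
have NT : N = setT.
  by apply/seteqP; split => // w _; apply: notQN => Qw; apply: noQ; exists w.
by move: PN; rewrite NT probability_setT => /eqP; rewrite eqe oner_eq0.
Qed.

Lemma Lfun_ae_bounded (p : \bar R) (f : T -> R) (M : R) : 1 <= p ->
  measurable_fun setT f -> {ae P, forall w, `|f w| <= M}%R -> f \in Lfun P p.
Proof.
move=> p1 mf fM.
apply: (Lfun_subset p1 (leey _) (fin_num_measure P _ measurableT) (leey p)).
rewrite inE; apply/andP; split; first by rewrite inE.
rewrite inE /finite_norm Lnorm.unlock /=; case: ifPn => _ //.
apply: (@le_lt_trans _ _ M%:E); last exact: ltry.
by apply/ess_supP; apply: filterS fM => w /=; rewrite lee_fin.
Qed.

Lemma abse_expectation_le (X : T -> R) : measurable_fun setT X ->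
  `|'E_P[X]| <= 'E_P[fun w => `|X w|%R].
Proof.
move=> mX; rewrite !unlock; under [leRHS]eq_integral do rewrite -abse_EFin.
by apply: le_abse_integral => //; exact/measurable_EFinP.
Qed.

Lemma covariance_sumr (X : T -> R) (I : Type) (r : seq I) (p : pred I)
    (Y : I -> T -> R) : X \in Lfun P 2%:E -> (forall i, Y i \in Lfun P 2%:E) ->
  covariance P X (\sum_(i <- r | p i) Y i) =
  \sum_(i <- r | p i) covariance P X (Y i).
Proof.
move=> X2 Y2; elim: r => [|j r IH]; first by rewrite !big_nil covariance_cst_r.
rewrite !big_cons; case: ifP => // _.
rewrite (covarianceDr X2 (Y2 j)) ?IH ?rpred_sum ?lee1n // => _ i _; exact: Y2.
Qed.

Lemma covariance_centeredE (X Y : T -> R) :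
    X \in Lfun P 2%:E -> Y \in Lfun P 2%:E ->
  covariance P X Y = 'E_P[(centered X \* Y)%R].
Proof.
move=> X2 Y2.
have Pfin := fin_num_measure P _ measurableT.
have X1 := Lfun_subset12 Pfin X2; have Y1 := Lfun_subset12 Pfin Y2.
set Xc := centered X.
have Xc2 : Xc \in Lfun P 2%:E by rewrite rpredB ?lee1n // => *; exact: Lfun_cst.
have Xc1 := Lfun_subset12 Pfin Xc2.
have EXc0 : 'E_P[Xc] = 0.
  rewrite expectationB ?Lfun_cst // expectation_cst.
  by rewrite fineK ?expectation_fin_num // subee // expectation_fin_num.
rewrite -[LHS]sube0 -(covariance_cst_l P (fine 'E_P[X]) Y).
rewrite -covarianceBl ?Lfun_cst // covarianceE ?Lfun2_mul_Lfun1 //.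
by rewrite EXc0 mul0e sube0.
Qed.

Lemma expectation_norm_centered_le (X : T -> R) : X \in Lfun P 1 ->
  'E_P[fun w => `|centered X w|%R] <= 2%:E * 'E_P[fun w => `|X w|%R].
Proof.
move=> X1; set mu := fine 'E_P[X].
have mX : measurable_fun setT X by case/andP: X1; rewrite inE.
have mu_le : `|mu|%:E <= 'E_P[fun w => `|X w|%R].
  by rewrite /mu -abse_EFin fineK ?expectation_fin_num // abse_expectation_le.
apply: (@le_trans _ _ 'E_P[fun w => (`|X w| + `|mu|)%R]).
  apply: expectation_le.
  - by apply: measurableT_comp => //; apply: measurable_funB.
  - by apply: measurable_funD => //; exact: measurableT_comp.
  - by [].
  - by move=> w; rewrite addr_ge0.
  - by apply: aeW => w; rewrite /centered /= ler_normB.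
rewrite expectationD ?Lfun_norm ?Lfun_cst // expectation_cst.
rewrite (_ : 2%:E = 1 + 1) // muleDl ?mul1e ?leeD2l //.
by rewrite expectation_fin_num ?Lfun_norm.
Qed.

Lemma covariance_le_ae_bounded (X Y : T -> R) (K : R) :
    X \in Lfun P 2%:E -> Y \in Lfun P 2%:E ->
    {ae P, forall w, `|Y w| <= K}%R ->
  covariance P X Y <= 2%:E * 'E_P[fun w => `|X w|%R] * K%:E.
Proof.
move=> X2 Y2 YK.
have [w0 /(le_trans (normr_ge0 _)) K0] := ae_exists YK.
have X1 := Lfun_subset12 (fin_num_measure P _ measurableT) X2.
have mX : measurable_fun setT X by case/andP: X1; rewrite inE.
have mY : measurable_fun setT Y by case/andP: Y2; rewrite inE.
set Xc := centered X.
have mXc : measurable_fun setT Xc by apply: measurable_funB.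
rewrite covariance_centeredE //.
apply: (@le_trans _ _ 'E_P[fun w => `|Xc w * Y w|%R]).
  apply: le_trans (lee_abs _) _.
  by apply: abse_expectation_le; exact: measurable_funM.
apply: (@le_trans _ _ 'E_P[(K \o* (fun w => `|Xc w|))%R]).
  apply: expectation_le => //.
  - by apply: measurableT_comp => //; apply: measurable_funM.
  - by apply: measurable_funM => //; apply: measurableT_comp.
  - by move=> w /=; rewrite mulr_ge0.
  - by apply: filterS YK => w /= YwK; rewrite normrM ler_wpM2l.
have Xc1 : Xc \in Lfun P 1 by rewrite rpredB ?lexx // => *; exact: Lfun_cst.
rewrite (expectationZl K (Lfun_norm Xc1)) muleC.
by rewrite lee_wpmul2r ?lee_fin // expectation_norm_centered_le.
Qed.

End bounded_covariance.

Theorem lemma1 (d : measure_display) (T : measurableType d) (R : realType)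
  (P : probability T R) (n : nat) (X : 'I_n -> {RV P >-> R}) (s : R)
  (hinf : {ae P, forall w, forall i : 'I_n, `|X i w| <= 1})
  (hone : {ae P, forall w, \sum_(i < n) `|X i w| <= s})
  (fam : {set {set 'I_n}}) :
  let m := (\max_(B in fam) #|B|)%N in
  forall (A : {set 'I_n}), A \in fam -> forall i : 'I_n,
  (\sum_(j in A) maxe 0%E (covariance P (X i) (X j))
     <= 2%:E * 'E_P[fun w => (`|X i w|)%R] * (Order.min s m%:R)%R%:E)%E.
Proof.
move=> m A Am i.
have X2 j : (X j : T -> R) \in Lfun P 2%:E.
  apply: (Lfun_ae_bounded (lee1n 2) (measurable_funPT (X j))).
  by apply: filterS hinf => w; apply.
pose c j := covariance P (X i) (X j).
pose Apos := [pred j | (j \in A) && (0 <= c j)%E].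
have -> : (\sum_(j in A) maxe 0 (c j) = \sum_(j in Apos) c j)%E.
  rewrite big_mkcondr; apply: eq_bigr => j _.
  by case: leP => [/max_r | /ltW/max_l].
rewrite -covariance_sumr //.
apply: covariance_le_ae_bounded => //.
  by rewrite rpred_sum ?lee1n // => *; exact: X2.
apply: filterS2 hinf hone => w X_le1 sum_le_s; rewrite fct_sumE.
apply: le_trans (ler_norm_sum_min Apos X_le1 sum_le_s) _.
rewrite le_min2 // ler_nat (leq_trans _ (leq_bigmax_cond _ Am)) //.
by apply: subset_leq_card; apply/fintype.subsetP => j /andP[].
Qed.
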